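(* For $n\geq 3$, the groups $H_n$ and $VP_n$ are not isomorphic.
   Context: The virtual braid group $VB_n$ is the group with generators $\sigma_i,\rho_i$ ($i=1,\dots,n-1$) and defining relations: $\sigma_i\sigma_{i+1}\sigma_i=\sigma_{i+1}\sigma_i\sigma_{i+1}$ ($1\le i\le n-2$); $\sigma_i\sigma_j=\sigma_j\sigma_i$ ($|i-j|\geq 2$); $\rho_i\rho_{i+1}\rho_i=\rho_{i+1}\rho_i\rho_{i+1}$ ($1\le i\le n-2$); $\rho_i\rho_j=\rho_j\rho_i$ ($|i-j|\geq 2$); $\rho_i^2=1$; $\sigma_i\rho_j=\rho_j\sigma_i$ ($|i-j|\geq2$); $\rho_i\rho_{i+1}\sigma_i=\sigma_{i+1}\rho_i\rho_{i+1}$ ($1\le i\le n-2$). $H_n$ is the kernel of $\mu:VB_n\to S_n$, $\mu(\sigma_i)=1$, $\mu(\rho_i)=(i\ i{+}1)$ (equivalently, the normal closure of $\langle\sigma_1,\dots,\sigma_{n-1}\rangle$). $VP_n$ is the kernel of $\nu:VB_n\to S_n$, $\nu(\sigma_i)=\nu(\rho_i)=(i\ i{+}1)$. *)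

(* The virtual braid group VB_n is encoded as
   words in the generators sigma_i, rho_i (and their inverses) modulo the
   congruence generated by free cancellation and the defining relations.
   Subgroups are predicates on words closed under that congruence; a group
   isomorphism between two such subgroups is a map on representatives that
   is well defined, multiplicative, injective and surjective modulo the
   congruence. *)
From mathcomp Require Import all_boot.
Set Implicit Arguments. Unset Strict Implicit. Unset Printing Implicit Defensive.

(* Generators, indexed 1 .. n-1 as in the paper. *)
Inductive letter := Sig of nat | Rho of nat.

(* A signed letter: (x, false) is x, (x, true) is x^-1. *)
Definition word := seq (letter * bool).

Definition lindex (x : letter) : nat := match x with Sig i => i | Rho i => i end.
Definition valid_letter (n : nat) (x : letter) : bool :=
  (1 <= lindex x <= n.-1)%N.
Definition wf_word (n : nat) (w : word) : bool :=
  all (fun p => valid_letter n p.1) w.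

Definition pos (x : letter) : letter * bool := (x, false).
Definition far (i j : nat) : bool := (i.+2 <= j)%N || (j.+2 <= i)%N.

Inductive vrel (n : nat) : word -> word -> Prop :=
| rel_ss3 i : (1 <= i)%N -> (i <= n - 2)%N ->
    vrel n [:: pos (Sig i); pos (Sig i.+1); pos (Sig i)]
           [:: pos (Sig i.+1); pos (Sig i); pos (Sig i.+1)]
| rel_ss2 i j : (1 <= i <= n.-1)%N -> (1 <= j <= n.-1)%N -> far i j ->
    vrel n [:: pos (Sig i); pos (Sig j)] [:: pos (Sig j); pos (Sig i)]
| rel_rr3 i : (1 <= i)%N -> (i <= n - 2)%N ->
    vrel n [:: pos (Rho i); pos (Rho i.+1); pos (Rho i)]
           [:: pos (Rho i.+1); pos (Rho i); pos (Rho i.+1)]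
| rel_rr2 i j : (1 <= i <= n.-1)%N -> (1 <= j <= n.-1)%N -> far i j ->
    vrel n [:: pos (Rho i); pos (Rho j)] [:: pos (Rho j); pos (Rho i)]
| rel_rsq i : (1 <= i <= n.-1)%N ->
    vrel n [:: pos (Rho i); pos (Rho i)] [::]
| rel_sr2 i j : (1 <= i <= n.-1)%N -> (1 <= j <= n.-1)%N -> far i j ->
    vrel n [:: pos (Sig i); pos (Rho j)] [:: pos (Rho j); pos (Sig i)]
| rel_mixed i : (1 <= i)%N -> (i <= n - 2)%N ->
    vrel n [:: pos (Rho i); pos (Rho i.+1); pos (Sig i)]
           [:: pos (Sig i.+1); pos (Rho i); pos (Rho i.+1)].

Inductive veq (n : nat) : word -> word -> Prop :=
| veq_refl w : veq n w w
| veq_sym u v : veq n u v -> veq n v u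
| veq_trans u v w : veq n u v -> veq n v w -> veq n u w
| veq_rel u v a b : vrel n a b -> veq n (u ++ a ++ v) (u ++ b ++ v)
| veq_free u v x e : valid_letter n x ->
    veq n (u ++ [:: (x, e); (x, ~~ e)] ++ v) (u ++ v).

Definition swapn (i k : nat) : nat :=
  if k == i then i.+1 else if k == i.+1 then i else k.

Definition mu_letter (x : letter) : nat -> nat :=
  match x with Sig _ => id | Rho i => swapn i end.
Definition nu_letter (x : letter) : nat -> nat :=
  match x with Sig i => swapn i | Rho i => swapn i end.

(* image of a word (transpositions are involutions, so inverses map alike) *)
Definition word_perm (f : letter -> nat -> nat) (w : word) : nat -> nat :=
  foldr (fun p g => f p.1 \o g) id w.

(* H_n = ker mu, VP_n = ker nu (as sets of representing words). *)
Definition inH (n : nat) (w : word) : Prop :=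
  wf_word n w /\ forall k, word_perm mu_letter w k = k.
Definition inVP (n : nat) (w : word) : Prop :=
  wf_word n w /\ forall k, word_perm nu_letter w k = k.

Definition subgroup_iso (n : nat) (A B : word -> Prop) (f : word -> word) : Prop :=
  [/\ (forall u, A u -> B (f u)),
      (forall u v, A u -> A v -> veq n u v -> veq n (f u) (f v)),
      (forall u v, A u -> A v -> veq n (f (u ++ v)) (f u ++ f v)),
      (forall u v, A u -> A v -> veq n (f u) (f v) -> veq n u v)
    & (forall w, B w -> exists2 u, A u & veq n (f u) w)].

(* A homomorphism H_n -> Z/2 is determined by its values on sigma_1 and
   rho_1 sigma_1 rho_1: a word in H_n is, in VB_n, a product of conjugates
   r sigma_i^(+-1) r^-1 by rho-words r (its rho-part has trivial permutation,
   hence is trivial because the rho_i satisfy the Coxeter relations of S_n),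
   and modulo 2 the braid and mixed relations identify the value on every such
   conjugate with one of the two values above.  On VP_n, by contrast, the
   parities of the numbers of crossings between the strands {1,2}, {1,3} and
   {2,3} are three linearly independent homomorphisms to Z/2.  An isomorphism
   H_n -> VP_n would pull back a nonzero combination of them vanishing on
   sigma_1 and rho_1 sigma_1 rho_1, hence on all of H_n, hence on VP_n. *)

From mathcomp Require Import all_boot zify.
Set Implicit Arguments. Unset Strict Implicit. Unset Printing Implicit Defensive.

Lemma swapn_out i k : k != i -> k != i.+1 -> swapn i k = k.
Proof. by rewrite /swapn => /negbTE -> /negbTE ->. Qed.

Lemma swapn_l i : swapn i i = i.+1.
Proof. by rewrite /swapn eqxx. Qed.

Lemma swapn_r i : swapn i i.+1 = i.
Proof. by rewrite /swapn eqxx (gtn_eqF (ltnSn i)). Qed.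

Ltac swapn_simpl :=
  repeat match goal with
  | |- context[swapn ?i ?i] => rewrite (swapn_l i)
  | |- context[swapn ?i ?i.+1] => rewrite (swapn_r i)
  | |- context[swapn ?i ?k] => rewrite (@swapn_out i k); [| apply/eqP; lia | apply/eqP; lia]
  end.

Ltac swapn_cases k i :=
  have [->|?] := eqVneq k i; [by swapn_simpl|];
  have [->|?] := eqVneq k i.+1; [by swapn_simpl|].

Lemma swapnK i k : swapn i (swapn i k) = k.
Proof. by swapn_cases k i; rewrite !swapn_out. Qed.

Lemma swapn_far i j k : far i j -> swapn i (swapn j k) = swapn j (swapn i k).
Proof. by rewrite /far => ?; swapn_cases k i; swapn_cases k j; rewrite !swapn_out. Qed.

Lemma swapn_braid i k :
  swapn i (swapn i.+1 (swapn i k)) = swapn i.+1 (swapn i (swapn i.+1 k)).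
Proof. by swapn_cases k i; swapn_cases k i.+1; rewrite !swapn_out. Qed.

Lemma mu_letterK x : involutive (mu_letter x).
Proof. by case: x => //= i; apply: swapnK. Qed.

Lemma nu_letterK x : involutive (nu_letter x).
Proof. by case: x => i; apply: swapnK. Qed.

Definition winv (w : word) : word := rev (map (fun p => (p.1, ~~ p.2)) w).
Definition wconj (r y : word) : word := r ++ y ++ winv r.

Lemma winv_cat u v : winv (u ++ v) = winv v ++ winv u.
Proof. by rewrite /winv map_cat rev_cat. Qed.

Lemma winv_cons p w : winv (p :: w) = winv w ++ [:: (p.1, ~~ p.2)].
Proof. by rewrite /winv /= rev_cons cats1. Qed.

Lemma wconj_cat r s y : wconj (r ++ s) y = wconj r (wconj s y).
Proof. by rewrite /wconj winv_cat !catA. Qed.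

Lemma wf_word_cat n u v : wf_word n (u ++ v) = wf_word n u && wf_word n v.
Proof. exact: all_cat. Qed.

Lemma wf_word_winv n w : wf_word n (winv w) = wf_word n w.
Proof. by rewrite /wf_word /winv all_rev all_map. Qed.

Lemma word_perm_cat f u v k :
  word_perm f (u ++ v) k = word_perm f u (word_perm f v k).
Proof. by elim: u => //= p u IH; rewrite IH. Qed.

Lemma word_perm_winv f w : (forall x, involutive (f x)) ->
  forall k, word_perm f (w ++ winv w) k = k.
Proof.
move=> fK; elim: w => //= p w IH k.
by rewrite winv_cons catA word_perm_cat IH /= fK.
Qed.

Section Congruence.
Variable n : nat.

Lemma veq_ctx p s u v : veq n u v -> veq n (p ++ u ++ s) (p ++ v ++ s).
Proof.
elim=> {u v} [w | u v _ | u v w _ uv _ vw | u v a b ab | u v x e x_ok].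
- exact: veq_refl.
- exact: veq_sym.
- exact: veq_trans uv vw.
- by have := veq_rel (p ++ u) (v ++ s) ab; rewrite !catA.
- by have := veq_free (p ++ u) (v ++ s) e x_ok; rewrite !catA.
Qed.

Lemma veq_catl p u v : veq n u v -> veq n (p ++ u) (p ++ v).
Proof. by move=> uv; have := veq_ctx p [::] uv; rewrite !cats0. Qed.

Lemma veq_catr s u v : veq n u v -> veq n (u ++ s) (v ++ s).
Proof. exact: veq_ctx [::] s u v. Qed.

Lemma veq_wconj r y y' : veq n y y' -> veq n (wconj r y) (wconj r y').
Proof. exact: veq_ctx. Qed.

Lemma veq_winv_r w : wf_word n w -> veq n (w ++ winv w) [::].
Proof.
elim: w => [|[x e] w IH] /=; first by move=> _; apply: veq_refl.
case/andP=> x_ok w_ok; rewrite winv_cons /= catA.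
apply: veq_trans (veq_catl [:: (x, e)] (veq_catr [:: (x, ~~ e)] (IH w_ok))) _.
exact: (veq_free [::] [::] e x_ok).
Qed.

Lemma veq_winv_l w : wf_word n w -> veq n (winv w ++ w) [::].
Proof.
elim: w => [|[x e] w IH] /=; first by move=> _; apply: veq_refl.
case/andP=> x_ok w_ok; rewrite winv_cons /= -catA.
apply: veq_trans (veq_catl (winv w) _) (IH w_ok).
by have := veq_free [::] w (~~ e) x_ok; rewrite negbK.
Qed.

Lemma veq_winv_nil w : wf_word n w -> veq n w [::] -> veq n (winv w) [::].
Proof.
move=> w_ok w1; apply: veq_trans (veq_winv_l w_ok).
by have := veq_catl (winv w) (veq_sym w1); rewrite cats0.
Qed.

Lemma veq_wconj_nil r y : wf_word n r -> veq n r [::] -> veq n (wconj r y) y.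
Proof.
move=> r_ok r1; apply: veq_trans (veq_catr _ r1) _ => /=.
by have := veq_catl y (veq_winv_nil r_ok r1); rewrite cats0.
Qed.

End Congruence.

Lemma vrel_mu n u v : vrel n u v -> word_perm mu_letter u =1 word_perm mu_letter v.
Proof.
move=> uv k; case: uv => {u v} [i ? ?|i j ? ? ij|i ? ?|i j ? ? ij|i ?|i j ? ? ij|i ? ?];
  rewrite /word_perm /= ?swapnK //; first [exact: swapn_far ij | exact: swapn_braid].
Qed.

Lemma vrel_nu n u v : vrel n u v -> word_perm nu_letter u =1 word_perm nu_letter v.
Proof.
move=> uv k; case: uv => {u v} [i ? ?|i j ? ? ij|i ? ?|i j ? ? ij|i ?|i j ? ? ij|i ? ?];
  rewrite /word_perm /= ?swapnK //; first [exact: swapn_far ij | exact: swapn_braid].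
Qed.

Lemma veq_mu n u v : veq n u v -> word_perm mu_letter u =1 word_perm mu_letter v.
Proof.
elim=> {u v} [//|u v _ uv|u v w _ uv _ vw|u v a b ab|u v x e _] k.
- by rewrite uv.
- by rewrite uv vw.
- by rewrite !word_perm_cat (vrel_mu ab).
- by rewrite !word_perm_cat /= mu_letterK.
Qed.

Notation rh i := (pos (Rho i)).
Notation sg i := [:: pos (Sig i)].

Section RhoWords.
Variable n : nat.

Definition rho_word (j : nat) (w : word) : bool :=
  all (fun p => if p.1 is Rho i then (j <= i) && (i < n) else false) w.

Lemma rho_word_cat j u v : rho_word j (u ++ v) = rho_word j u && rho_word j v.
Proof. exact: all_cat. Qed.

Lemma rho_word_wf r : rho_word 1 r -> wf_word n r.
Proof.
by apply: sub_all => -[[] i e] //=; rewrite /valid_letter /=; lia.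
Qed.

Lemma rho_word_perm_fix j u : rho_word j.+1 u -> word_perm mu_letter u j = j.
Proof.
elim: u => //= -[[] i e] u IH /andP[// i_ok u_ok].
by rewrite IH //= swapn_out //; apply/eqP; lia.
Qed.

Fixpoint rho_chain (j d : nat) : word :=
  if d is d'.+1 then rh (j + d') :: rho_chain j d' else [::].

Lemma rho_chain_add j a b : rho_chain j (a + b) = rho_chain (j + a) b ++ rho_chain j a.
Proof. by elim: b => [|b IH] /=; rewrite ?addn0 // addnS /= IH addnA. Qed.

Lemma rho_chain_perm j d : word_perm mu_letter (rho_chain j d) j = j + d.
Proof. by elim: d => [|d IH] /=; rewrite ?addn0 // IH swapn_l addnS. Qed.

Lemma veq_rho_sign u v i e e' : 0 < i < n ->
  veq n (u ++ (Rho i, e) :: v) (u ++ (Rho i, e') :: v).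
Proof.
move=> i_ok.
have i_valid : valid_letter n (Rho i) by rewrite /valid_letter /=; lia.
have inv_rho : veq n [:: (Rho i, true)] [:: rh i].
  apply: veq_trans (_ : veq n [:: (Rho i, true); rh i; rh i] _).
    have := veq_rel [:: (Rho i, true)] [::] (@rel_rsq n i ltac:(lia)).
    by rewrite cats0 => /veq_sym.
  exact: (veq_free [::] [:: rh i] true i_valid).
case: e; case: e'; try apply: veq_refl.
- exact: (veq_ctx u v inv_rho).
- exact: (veq_ctx u v (veq_sym inv_rho)).
Qed.

Lemma veq_rho_chain_comm m j d s : 0 < m < n -> 0 < j -> j + d <= n ->
  (m + 2 <= j) || (j + d + 1 <= m) ->
  veq n (rh m :: rho_chain j d ++ s) (rho_chain j d ++ rh m :: s).
Proof.
move=> m_ok j_gt0; elim: d => [|d IH] d_ok m_far /=; first exact: veq_refl.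
apply: veq_trans (_ : veq n (rh (j + d) :: rh m :: rho_chain j d ++ s) _).
  have comm : vrel n [:: rh m; rh (j + d)] [:: rh (j + d); rh m].
    by apply: rel_rr2; rewrite /far; lia.
  exact: (veq_rel [::] (rho_chain j d ++ s) comm).
by apply: (veq_catl [:: rh (j + d)]); apply: IH; lia.
Qed.

Lemma rho_chain_cons i j d u : 0 < j <= i -> i < n -> j + d <= n -> rho_word j.+1 u ->
  exists d' u', [/\ j + d' <= n, rho_word j.+1 u' &
                    veq n (rh i :: rho_chain j d ++ u) (rho_chain j d' ++ u')].
Proof.
move=> ij_ok i_lt d_ok u_ok.
have [top|not_top] := eqVneq i (j + d).
  by exists d.+1, u; split; rewrite //= -?top ?addnS; [lia | apply: veq_refl].
have [below_top|not_below_top] := eqVneq i.+1 (j + d).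
  case: d d_ok below_top {not_top} => [|d] d_ok below_top; first lia.
  exists d, u; split => //; first lia.
  have -> : i = j + d by lia.
  exact: (veq_rel [::] (rho_chain j d ++ u) (@rel_rsq n (j + d) ltac:(lia))).
have [above|inside] := leqP (j + d + 1) i.
  exists d, (rh i :: u); split => //=; first by rewrite u_ok andbT; lia.
  by apply: veq_rho_chain_comm => //; lia.
have [a Ea] : exists a, i = j + a by exists (i - j); lia.
have [b Eb] : exists b, d = a.+2 + b by exists (d - a.+2); lia.
exists d, (rh i.+1 :: u); split => //=; first by rewrite u_ok andbT; lia.
rewrite Eb rho_chain_add /= -!catA /= !addnS -Ea.
have braid : vrel n [:: rh i; rh i.+1; rh i] [:: rh i.+1; rh i; rh i.+1].
  by apply: rel_rr3; lia.
apply: veq_trans; first by apply: veq_rho_chain_comm; lia.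
apply: veq_catl; apply: veq_trans (veq_rel [::] _ braid) _.
by apply: (veq_catl [:: rh i.+1; rh i]); apply: veq_rho_chain_comm; lia.
Qed.

Lemma rho_word_normal_form j w : 0 < j <= n -> rho_word j w ->
  exists d u, [/\ j + d <= n, rho_word j.+1 u & veq n w (rho_chain j d ++ u)].
Proof.
move=> j_ok; elim: w => [|[[//|i] e] w IH] /=.
  by move=> _; exists 0, [::]; split; rewrite ?addn0 //; [lia | apply: veq_refl].
case/andP=> i_ok /IH [d [u [d_ok u_ok wdu]]].
have [||d' [u' [d'_ok u'_ok nf]]] := @rho_chain_cons i j d u _ _ d_ok u_ok; try lia.
exists d', u'; split => //; apply: veq_trans nf.
apply: veq_trans (veq_catl [:: (Rho i, e)] wdu) _ => /=.
by apply: (veq_rho_sign [::] (rho_chain j d ++ u) e false); lia.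
Qed.

Lemma rho_word_trivial j w : 0 < j <= n -> rho_word j w ->
  word_perm mu_letter w =1 id -> veq n w [::].
Proof.
move Em : (n - j) => m; elim: m j w Em => [|m IH] j w Em j_ok w_ok w_id.
  by case: w w_ok {w_id} => [_|[[//|i] e] w] /=; [apply: veq_refl | lia].
have [d [u [d_ok u_ok wdu]]] := rho_word_normal_form j_ok w_ok.
have d0 : d = 0.
  have := w_id j; rewrite (veq_mu wdu) word_perm_cat (rho_word_perm_fix u_ok).
  by rewrite rho_chain_perm /=; lia.
rewrite d0 /= in wdu; apply: (veq_trans wdu).
by apply: (IH j.+1) => //; [lia | lia | move=> k; rewrite -(veq_mu wdu) w_id].
Qed.

End RhoWords.

Section Identities.
Variable n : nat.

Lemma veq_rho_pair j e : 0 < j < n -> veq n [:: (Rho j, e); rh j] [::].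
Proof.
move=> j_ok; case: e.
  by apply: (veq_free [::] [::] true); rewrite /valid_letter /=; lia.
exact: (veq_rel [::] [::] (@rel_rsq n j ltac:(lia))).
Qed.

Lemma veq_wconj_rho_sign j e y : 0 < j < n ->
  veq n (wconj [:: (Rho j, e)] y) (wconj [:: rh j] y).
Proof.
move=> j_ok; rewrite /wconj /=; apply: veq_trans (veq_rho_sign [::] _ e false j_ok) _.
by apply: (veq_rho_sign (rh j :: y)); lia.
Qed.

Lemma veq_rho_swap_sigma k : 0 < k -> k.+1 < n ->
  veq n (wconj [:: rh k.+1] (sg k)) (wconj [:: rh k] (sg k.+1)).
Proof.
move=> k_gt0 k_lt; rewrite /wconj /=.
have mixed := veq_rel [:: rh k] [:: rh k.+1] (@rel_mixed n k k_gt0 ltac:(lia)).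
have square i : 0 < i < n -> veq n [:: rh i; rh i] [::] by move=> ?; apply: veq_rho_pair.
apply: veq_trans (veq_rho_sign [:: rh k.+1; pos (Sig k)] [::] true false _) _; first lia.
apply: veq_trans (veq_sym (veq_catr _ (square k _))) _; first lia.
apply: veq_trans mixed _.
apply: veq_trans (veq_catl [:: rh k; pos (Sig k.+1); rh k] (square k.+1 _)) _; first lia.
by apply: (veq_rho_sign [:: rh k; pos (Sig k.+1)] [::]); lia.
Qed.

End Identities.

Definition rho_part (w : word) : word :=
  filter (fun p => if p.1 is Rho _ then true else false) w.

Lemma rho_part_perm w : word_perm mu_letter (rho_part w) =1 word_perm mu_letter w.
Proof. by elim: w => [|[[] i e] w IH] k //=; rewrite IH. Qed.

Lemma rho_word_rho_part n w : wf_word n w -> rho_word n 1 (rho_part w).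
Proof.
elim: w => [|[[] i e] w IH] //= /andP[i_ok /IH w_ok] //=.
by rewrite w_ok andbT; move: i_ok; rewrite /valid_letter /=; lia.
Qed.

Section SubgroupH.
Variable n : nat.

Lemma inH_nil : inH n [::].
Proof. by []. Qed.

Lemma inH_cat u v : inH n u -> inH n v -> inH n (u ++ v).
Proof.
case=> u_ok u_id [v_ok v_id]; split; first by rewrite wf_word_cat u_ok.
by move=> k; rewrite word_perm_cat v_id u_id.
Qed.

Lemma inH_wconj r y : wf_word n r -> inH n y -> inH n (wconj r y).
Proof.
move=> r_ok [y_ok y_id]; split; first by rewrite !wf_word_cat wf_word_winv r_ok y_ok.
move=> k; rewrite !word_perm_cat y_id -word_perm_cat.
exact: word_perm_winv mu_letterK k.
Qed.

Lemma inH_sig i e : 0 < i < n -> inH n [:: (Sig i, e)].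
Proof. by move=> i_ok; split; rewrite // /wf_word /= /valid_letter /= andbT; lia. Qed.

Lemma inH_split r w : rho_word n 1 r -> wf_word n w ->
  inH n (r ++ w ++ winv (r ++ rho_part w)).
Proof.
move=> r_ok w_ok; have r_wf := rho_word_wf r_ok; split.
  by rewrite !wf_word_cat wf_word_winv wf_word_cat r_wf w_ok rho_word_wf
             ?rho_word_rho_part.
move=> k; rewrite winv_cat !word_perm_cat -(rho_part_perm w).
rewrite -(word_perm_cat _ (rho_part w)) (word_perm_winv _ mu_letterK).
by rewrite -word_perm_cat (word_perm_winv _ mu_letterK).
Qed.

Lemma wf_rho i : 0 < i < n -> wf_word n [:: rh i].
Proof. by move=> i_ok; rewrite /wf_word /= /valid_letter /= andbT; lia. Qed.

End SubgroupH.

Section CharactersH.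
Variables (n : nat) (psi : word -> bool).
Hypothesis psi_wd : forall u v, inH n u -> inH n v -> veq n u v -> psi u = psi v.
Hypothesis psi_add : forall u v, inH n u -> inH n v -> psi (u ++ v) = psi u (+) psi v.

Lemma psi_nil : psi [::] = false.
Proof. by have := psi_add (inH_nil n) (inH_nil n); case: (psi [::]). Qed.

Lemma psi_wconj_veq r y y' : wf_word n r -> inH n y -> inH n y' -> veq n y y' ->
  psi (wconj r y) = psi (wconj r y').
Proof.
by move=> r_ok y_ok y'_ok yy'; apply: psi_wd; try apply: inH_wconj; last apply: veq_wconj.
Qed.

Lemma psi_wconj_cat r a b : wf_word n r -> inH n a -> inH n b ->
  psi (wconj r (a ++ b)) = psi (wconj r a) (+) psi (wconj r b).
Proof.
move=> r_ok a_ok b_ok; rewrite -psi_add; try exact: inH_wconj.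
apply: psi_wd; first by apply: inH_wconj => //; apply: inH_cat.
  by apply: inH_cat; apply: inH_wconj.
have -> : wconj r a ++ wconj r b = r ++ a ++ (winv r ++ r) ++ b ++ winv r.
  by rewrite /wconj -!catA.
rewrite /wconj -catA; apply: veq_catl; apply: veq_catl; apply: veq_sym.
exact: (veq_catr (b ++ winv r) (veq_winv_l r_ok)).
Qed.

(* Modulo 2 the braid relation a b a = b a b reads b = a. *)
Lemma psi_wconj_sigma_succ r i : wf_word n r -> 0 < i -> i.+1 < n ->
  psi (wconj r (sg i.+1)) = psi (wconj r (sg i)).
Proof.
move=> r_ok i_gt0 i_lt.
have a_ok : inH n (sg i) by apply: inH_sig; lia.
have b_ok : inH n (sg i.+1) by apply: inH_sig; lia.
have := psi_wconj_veq r_ok (inH_cat a_ok (inH_cat b_ok a_ok)) (inH_cat b_ok (inH_cat a_ok b_ok))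
          (veq_rel [::] [::] (@rel_ss3 n i i_gt0 ltac:(lia))).
rewrite /= -[[:: pos (Sig i); _; _]]/(sg i ++ sg i.+1 ++ sg i).
rewrite -[[:: pos (Sig i.+1); _; _]]/(sg i.+1 ++ sg i ++ sg i.+1).
by rewrite !psi_wconj_cat //; try exact: inH_cat; do 2 case: (psi (wconj r (sg _))).
Qed.

Lemma psi_wconj_sigma r i : wf_word n r -> 0 < i < n ->
  psi (wconj r (sg i)) = psi (wconj r (sg 1)).
Proof.
move=> r_ok; elim: i => [|[|i] IH] i_ok //.
by rewrite psi_wconj_sigma_succ ?IH //; lia.
Qed.

Lemma psi_wconj_rho_sigma r i : wf_word n r -> 0 < i < n ->
  psi (wconj (r ++ [:: rh i]) (sg i)) = psi (wconj (r ++ [:: rh 1]) (sg 1)).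
Proof.
move=> r_ok; elim: i => [|[|k] IH] k_ok //.
have wf_r_rho i : 0 < i < n -> wf_word n (r ++ [:: rh i]).
  by move=> i_ok; rewrite wf_word_cat r_ok wf_rho.
have rho_sigma_ok i j : 0 < i < n -> 0 < j < n -> inH n (wconj [:: rh i] (sg j)).
  by move=> i_ok j_ok; apply: inH_wconj; [apply: wf_rho | apply: inH_sig].
rewrite psi_wconj_sigma_succ ?wf_r_rho //; try lia.
rewrite {1}wconj_cat (psi_wconj_veq r_ok _ _ (veq_rho_swap_sigma _ _)); try lia.
- by rewrite -wconj_cat psi_wconj_sigma_succ ?wf_r_rho ?IH //; lia.
- by apply: rho_sigma_ok; lia.
- by apply: rho_sigma_ok; lia.
Qed.

Hypothesis psi_sigma1 : psi (sg 1) = false.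
Hypothesis psi_rho_sigma1 : psi (wconj [:: rh 1] (sg 1)) = false.

Lemma psi_wconj_rho_word r : rho_word n 1 r ->
  psi (wconj r (sg 1)) = false /\ psi (wconj (r ++ [:: rh 1]) (sg 1)) = false.
Proof.
elim/last_ind: r => [//|r [[i|j] e] IH]; rewrite -cats1 => rj_ok.
  by move: rj_ok; rewrite rho_word_cat andbF.
move: (rj_ok); rewrite rho_word_cat /= andbT => /andP[r_ok j_ok].
have [IH1 IH2] := IH r_ok.
have rj_wf := rho_word_wf rj_ok; have r_wf := rho_word_wf r_ok.
have {}j_ok : 0 < j < n by lia.
have sigma_j_ok : inH n (sg j) by apply: inH_sig.
have rho_j_wf e' : wf_word n [:: (Rho j, e')] by rewrite /wf_word /= /valid_letter /=; lia.
have pair_wf : wf_word n [:: (Rho j, e); rh j] by rewrite /wf_word /= /valid_letter /=; lia.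
split.
  rewrite -(psi_wconj_sigma rj_wf j_ok) wconj_cat.
  rewrite (psi_wconj_veq r_wf _ _ (veq_wconj_rho_sign e _ j_ok)) -?wconj_cat;
    try by apply: inH_wconj; first apply: rho_j_wf.
  by rewrite psi_wconj_rho_sigma.
rewrite -(psi_wconj_rho_sigma rj_wf j_ok) -catA wconj_cat.
rewrite (psi_wconj_veq r_wf _ _ (veq_wconj_nil _ pair_wf (veq_rho_pair e j_ok))) //;
  try by apply: inH_wconj.
by rewrite (psi_wconj_sigma r_wf j_ok).
Qed.

Lemma psi_wconj_sig r i e : rho_word n 1 r -> 0 < i < n ->
  psi (wconj r [:: (Sig i, e)]) = false.
Proof.
move=> r_ok i_ok; have r_wf := rho_word_wf r_ok.
have sigma_vanish : psi (wconj r (sg i)) = false.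
  by rewrite psi_wconj_sigma // (psi_wconj_rho_word r_ok).1.
case: e => //; have := psi_wconj_cat r_wf (inH_sig true i_ok) (inH_sig false i_ok).
rewrite sigma_vanish addbF => <-.
have sigma_ok : valid_letter n (Sig i) by rewrite /valid_letter /=; lia.
rewrite (psi_wd _ (inH_nil n) (veq_trans (veq_wconj r (veq_free [::] [::] true sigma_ok)) _)).
- exact: psi_nil.
- exact: inH_wconj r_wf (inH_cat (inH_sig true i_ok) (inH_sig false i_ok)).
- exact: veq_winv_r.
Qed.

(* Each letter sigma_i^e of w contributes the conjugate of sigma_i^e by the
   rho-letters read before it. *)
Lemma psi_split r w : rho_word n 1 r -> wf_word n w ->
  psi (r ++ w ++ winv (r ++ rho_part w)) = false.
Proof.
elim: w r => [|[[] i e] w IH] r r_ok /=.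
- have r_wf := rho_word_wf r_ok.
  move=> _; rewrite cats0 (psi_wd (v := [::])) ?psi_nil //; last exact: veq_winv_r.
  exact: (inH_wconj r_wf (inH_nil n)).
- case/andP=> i_valid w_ok; have r_wf := rho_word_wf r_ok.
  have i_ok : 0 < i < n by move: i_valid; rewrite /valid_letter /=; lia.
  have sig_ok : inH n (wconj r [:: (Sig i, e)]) by apply: inH_wconj => //; apply: inH_sig.
  have split_ok := inH_split r_ok w_ok.
  rewrite (psi_wd _ (inH_cat sig_ok split_ok)).
  + by rewrite psi_add // psi_wconj_sig // IH.
  + by apply: (inH_split r_ok (w := (Sig i, e) :: w)); rewrite /wf_word /= i_valid.
  rewrite /wconj -!catA; apply: (veq_catl r); apply: (veq_catl [:: (Sig i, e)]) => /=.
  by rewrite catA; apply: veq_sym; exact: (veq_catr (w ++ _) (veq_winv_l r_wf)).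
- case/andP=> i_ok w_ok; rewrite -cat1s catA -(cat1s _ (rho_part w)) (catA r).
  by apply: IH; rewrite // rho_word_cat r_ok /= andbT; move: i_ok; rewrite /valid_letter /=; lia.
Qed.

Lemma psi_H_trivial w : 0 < n -> inH n w -> psi w = false.
Proof.
move=> n_gt0 w_H; have [w_wf w_id] := w_H.
have nil_ok : rho_word n 1 [::] by [].
have rho_part_trivial : veq n (winv (rho_part w)) [::].
  apply: veq_winv_nil; first exact/rho_word_wf/rho_word_rho_part.
  apply: (@rho_word_trivial n 1); rewrite ?rho_word_rho_part // => k.
  by rewrite rho_part_perm w_id.
rewrite -(psi_split nil_ok w_wf); apply: psi_wd => //; first exact: inH_split.
by have := veq_catl w (veq_sym rho_part_trivial); rewrite cats0.
Qed.

End CharactersH.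

Definition same_pair (a b x y : nat) : bool :=
  ((x == a) && (y == b)) || ((x == b) && (y == a)).

Lemma same_pairC a b x y : same_pair a b x y = same_pair a b y x.
Proof. by rewrite /same_pair orbC !(andbC (y == _)). Qed.

(* [g k] is the strand at position [k] before reading [w]. *)
Fixpoint crossing_parity (a b : nat) (g : nat -> nat) (w : word) : bool :=
  if w is (x, _) :: w' then
    match x with
    | Sig i => same_pair a b (g i) (g i.+1) (+) crossing_parity a b (g \o swapn i) w'
    | Rho i => crossing_parity a b (g \o swapn i) w'
    end
  else false.

Lemma eq_crossing_parity a b g g' w : g =1 g' ->
  crossing_parity a b g w = crossing_parity a b g' w.
Proof.
elim: w g g' => [|[[] i e] w IH] g g' gg' //=;
  by rewrite (IH _ (g' \o swapn i)) ?gg' // => k /=; rewrite gg'.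
Qed.

Lemma crossing_parity_cat a b g u v :
  crossing_parity a b g (u ++ v) =
  crossing_parity a b g u (+) crossing_parity a b (g \o word_perm nu_letter u) v.
Proof.
elim: u g => [|[[] i e] u IH] g /=; first exact: eq_crossing_parity.
- by rewrite IH addbA.
- by rewrite IH.
Qed.

Lemma crossing_parity_veq n a b u v : veq n u v ->
  crossing_parity a b ^~ u =1 crossing_parity a b ^~ v.
Proof.
have rel_parity u' v' g : vrel n u' v' -> crossing_parity a b g u' = crossing_parity a b g v'.
  case=> {u' v'} [i ? ?|i j ? ? ij|i ? ?|i j ? ? ij|i ?|i j ? ? ij|i ? ?] /=;
    try rewrite /far in ij; swapn_simpl; rewrite ?addbF //.
  - by do 3 case: same_pair.
  - exact: addbC.
elim=> {u v} [//|u v _ uv|u v w _ uv _ vw|u v a' b' ab|u v x e _] g.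
- by rewrite uv.
- by rewrite uv vw.
- rewrite !crossing_parity_cat (rel_parity _ _ _ ab).
  rewrite (@eq_crossing_parity a b _ (g \o word_perm nu_letter u \o word_perm nu_letter b') v) //.
  by move=> k /=; rewrite (vrel_nu ab).
- have free g' : crossing_parity a b g' [:: (x, e); (x, ~~ e)] = false.
    by case: x => i /=; swapn_simpl; rewrite ?addbF // (same_pairC _ _ (g' i.+1)) addbb.
  rewrite !crossing_parity_cat free addFb.
  rewrite (@eq_crossing_parity a b _ (g \o word_perm nu_letter u) v) //.
  by move=> k /=; rewrite nu_letterK.
Qed.

Definition vp_parity (a b : nat) (w : word) : bool := crossing_parity a b id w.

Lemma vp_parity_cat n a b u v : inVP n u ->
  vp_parity a b (u ++ v) = vp_parity a b u (+) vp_parity a b v.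
Proof.
by case=> _ u_id; rewrite /vp_parity crossing_parity_cat (@eq_crossing_parity a b _ id v).
Qed.

Definition dot3 (c1 c2 c3 x1 x2 x3 : bool) : bool := (c1 && x1) (+) (c2 && x2) (+) (c3 && x3).

Lemma dot3_addr c1 c2 c3 x1 x2 x3 y1 y2 y3 :
  dot3 c1 c2 c3 (x1 (+) y1) (x2 (+) y2) (x3 (+) y3) =
  dot3 c1 c2 c3 x1 x2 x3 (+) dot3 c1 c2 c3 y1 y2 y3.
Proof.
by case: c1; case: c2; case: c3; case: x1; case: x2; case: x3; case: y1; case: y2; case: y3.
Qed.

Definition parity_comb (c1 c2 c3 : bool) (w : word) : bool :=
  dot3 c1 c2 c3 (vp_parity 1 2 w) (vp_parity 1 3 w) (vp_parity 2 3 w).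

Lemma parity_comb_veq n c1 c2 c3 u v : veq n u v ->
  parity_comb c1 c2 c3 u = parity_comb c1 c2 c3 v.
Proof. by move=> uv; rewrite /parity_comb /vp_parity !(crossing_parity_veq _ _ uv). Qed.

Lemma parity_comb_cat n c1 c2 c3 u v : inVP n u ->
  parity_comb c1 c2 c3 (u ++ v) = parity_comb c1 c2 c3 u (+) parity_comb c1 c2 c3 v.
Proof. by move=> u_VP; rewrite /parity_comb !(vp_parity_cat _ _ _ u_VP) dot3_addr. Qed.

Lemma dot3_kernel x1 x2 x3 y1 y2 y3 : exists c1 c2 c3,
  [&& [|| c1, c2 | c3], ~~ dot3 c1 c2 c3 x1 x2 x3 & ~~ dot3 c1 c2 c3 y1 y2 y3].
Proof.
case: x1; case: x2; case: x3; case: y1; case: y2; case: y3;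
  first [ by exists true, false, false | by exists false, true, false
        | by exists false, false, true | by exists true, true, false
        | by exists true, false, true | by exists false, true, true
        | by exists true, true, true ].
Qed.

Lemma parity_comb_VP_trivial n c1 c2 c3 : 3 <= n ->
  (forall w, inVP n w -> parity_comb c1 c2 c3 w = false) -> ~~ [|| c1, c2 | c3].
Proof.
move=> n_ge3 vanish.
have test w : all (fun p => 0 < lindex p.1 < 3) w -> word_perm nu_letter w =1 id ->
    parity_comb c1 c2 c3 w = false.
  move=> w_ok w_id; apply: vanish; split => //.
  by apply: sub_all w_ok => p; rewrite /valid_letter; lia.
have := test [:: rh 1; pos (Sig 1)] isT (swapnK 1).
have := test [:: rh 2; pos (Sig 2)] isT (swapnK 2).
have := test [:: rh 2; rh 1; pos (Sig 1); rh 2] isT.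
rewrite /parity_comb /vp_parity /word_perm /= /dot3; swapn_simpl.
have two_swaps : swapn 2 \o (swapn 1 \o (swapn 1 \o (swapn 2 \o id))) =1 id.
  by move=> k /=; rewrite !swapnK.
by move=> /(_ two_swaps); clear vanish test; case: c1; case: c2; case: c3.
Qed.

Theorem proposition7p1 (n : nat) (hn : (3 <= n)%N) :
  ~ (exists f : word -> word, subgroup_iso n (inH n) (inVP n) f).
Proof.
case=> f [f_VP f_wd f_mul _ f_onto].
have [c1 [c2 [c3 /and3P[c_nz /negbTE c_sigma /negbTE c_rho_sigma]]]] :
    exists c1 c2 c3, [&& [|| c1, c2 | c3], ~~ parity_comb c1 c2 c3 (f (sg 1))
                       & ~~ parity_comb c1 c2 c3 (f (wconj [:: rh 1] (sg 1)))].
  exact: dot3_kernel.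
pose psi u := parity_comb c1 c2 c3 (f u).
have psi_wd u v : inH n u -> inH n v -> veq n u v -> psi u = psi v.
  by move=> u_H v_H uv; apply: parity_comb_veq (f_wd u v u_H v_H uv).
have psi_add u v : inH n u -> inH n v -> psi (u ++ v) = psi u (+) psi v.
  move=> u_H v_H; rewrite /psi (parity_comb_veq _ _ _ (f_mul u v u_H v_H)).
  exact: parity_comb_cat (f_VP u u_H).
have psi_H0 := psi_H_trivial psi_wd psi_add c_sigma c_rho_sigma.
suff : ~~ [|| c1, c2 | c3] by rewrite c_nz.
apply: (parity_comb_VP_trivial hn) => w w_VP.
have [u u_H fu_w] := f_onto w w_VP.
by rewrite -(parity_comb_veq _ _ _ fu_w); apply: psi_H0 (ltnW (ltnW hn)) u_H.
Qed.
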